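(* Let $(X,\rho)$ be a finite metric space, $W\subseteq X$, $T\subseteq X$ nonempty, $z>0$, and let $\mathcal{B}=(\mathcal{B}(1),\ldots,\mathcal{B}(L))$ be a $z$-linear bin division of $W$ with respect to $T$. Let $A\subseteq W$ and $r\in(0,1)$. If $|\mathcal{B}(i)\cap A|/|\mathcal{B}(i)|\le r$ for all $i\in[L]$, then $$R(A\setminus\mathcal{B}(1),T)\le \tfrac32\, r\, R(W,T).$$
   Context: $\rho(x,T):=\min_{y\in T}\rho(x,y)$ and $R(S,T):=\sum_{x\in S}\rho(x,T)$. A $z$-linear bin division of $W$ with respect to $T$ is a partition $\mathcal{B}=(\mathcal{B}(1),\ldots,\mathcal{B}(L))$ of $W$ such that: (1) if $z\le |W|$ then $|\mathcal{B}(i)|\ge z(i+1)/2$ for all $i\in[L]$; otherwise ($|W|<z$) the division is trivial, $\mathcal{B}(1):=W$; (2) $|\mathcal{B}(1)|\le\frac52 z$; (3) $|\mathcal{B}(i+1)|/|\mathcal{B}(i)|\le 3/2$ for $i\in[L-1]$; (4) for $i\in[L-1]$, $x\in\mathcal{B}(i)$, $x'\in\mathcal{B}(i+1)$: $\rho(x,T)\ge\rho(x',T)$. *)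

From mathcomp Require Import all_boot all_order all_algebra.
Set Implicit Arguments. Unset Strict Implicit. Unset Printing Implicit Defensive.
Import Order.TTheory GRing.Theory Num.Theory.
Local Open Scope ring_scope.

Definition is_metric (R : realFieldType) (X : finType) (rho : X -> X -> R) : Prop :=
  [/\ forall x y, 0 <= rho x y,
      forall x y, (rho x y == 0) = (x == y),
      forall x y, rho x y = rho y x &
      forall x y w, rho x w <= rho x y + rho y w].

(* rho(x, T) := min_{y in T} rho(x, y)   (meaningful for T nonempty; 0 if T = set0) *)
Definition dist_set (R : realFieldType) (X : finType) (rho : X -> X -> R)
  (x : X) (T : {set X}) : R :=
  match [pick y in T] with
  | Some y0 => \big[Num.min/rho x y0]_(y in T) rho x y
  | None => 0
  end.

Definition cost (R : realFieldType) (X : finType) (rho : X -> X -> R)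
  (S T : {set X}) : R :=
  \sum_(x in S) dist_set rho x T.

(* B = (B(1), ..., B(L)) is represented by a list B of length L, with
   B(i) = nth set0 B (i-1).  It is an ordered partition of W:
   L >= 1, bins are pairwise disjoint, and their union is W. *)
Definition ordered_partition (X : finType) (B : seq {set X}) (W : {set X}) : Prop :=
  [/\ (0 < size B)%N,
      (\bigcup_(k < size B) nth set0 B k) = W &
      forall k l, (k < size B)%N -> (l < size B)%N -> k <> l ->
        [disjoint nth set0 B k & nth set0 B l]].

(* z-linear bin division of W with respect to T (0-based index k = i - 1). *)
Definition linear_bin_division (R : realFieldType) (X : finType)
  (rho : X -> X -> R) (z : R) (W T : {set X}) (B : seq {set X}) : Prop :=
  [/\ ordered_partition B W,
      (if z <= #|W|%:R then
         forall k, (k < size B)%N -> z * (k.+2)%:R / 2%:R <= #|nth set0 B k|%:R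
       else B = [:: W]),
      (#|nth set0 B 0|%:R : R) <= 5 / 2 * z,
      (forall k, (k.+1 < size B)%N ->
         (#|nth set0 B k.+1|%:R : R) / #|nth set0 B k|%:R <= 3 / 2) &
      (forall k, (k.+1 < size B)%N -> forall x x',
         x \in nth set0 B k -> x' \in nth set0 B k.+1 ->
         dist_set rho x' T <= dist_set rho x T)].

From mathcomp Require Import all_boot all_order all_algebra.
From mathcomp Require Import ring.
Import Order.TTheory GRing.Theory Num.Theory.
Local Open Scope ring_scope.

(* Split A \ B(1) along the bins: R(A \ B(1), T) = sum_{i >= 1} R(A ∩ B(i+1), T).
   Each point of B(i+1) is at most as far from T as any point of B(i)
   (property (4)), so by averaging the average cost of the points of
   A ∩ B(i+1) is at most the average cost of B(i):
       R(A ∩ B(i+1), T) * |B(i)| <= R(B(i), T) * |A ∩ B(i+1)|.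
   Since |A ∩ B(i+1)| <= r |B(i+1)| <= (3/2) r |B(i)| (density hypothesis and
   property (3)), this gives R(A ∩ B(i+1), T) <= (3/2) r R(B(i), T).  Summing
   over i and adding the nonnegative term for the last bin bounds the total by
   (3/2) r R(W, T).  The trivial division B = [:: W] leaves A \ B(1) empty. *)

Lemma dist_set_ge0 {R : realFieldType} {X : finType} {rho : X -> X -> R} :
  is_metric rho -> forall (x : X) (T : {set X}), 0 <= dist_set rho x T.
Proof.
move=> [rho_ge0 _ _ _] x T; rewrite /dist_set; case: pickP => [y0 _|//].
apply: (big_ind (fun v => 0 <= v)) => // a b a_ge0 b_ge0.
by rewrite le_min a_ge0 b_ge0.
Qed.

Lemma cost_ge0 {R : realFieldType} {X : finType} {rho : X -> X -> R} :
  is_metric rho -> forall (S T : {set X}), 0 <= cost rho S T.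
Proof. by move=> metric_rho S T; apply: sumr_ge0 => x _; exact: dist_set_ge0. Qed.

(* Averaging: if f is pointwise smaller on S than on P, then the mean of f over
   S is at most its mean over P (stated without division). *)
Lemma sum_mul_card_le (R : numDomainType) (X : finType) (f : X -> R)
    (S P : {set X}) :
  (forall x y, x \in S -> y \in P -> f x <= f y) ->
  (\sum_(x in S) f x) * #|P|%:R <= (\sum_(y in P) f y) * #|S|%:R.
Proof.
move=> f_le; rewrite !mulr_natr -(sumr_const (mem P)) -(sumr_const (mem S)).
rewrite exchange_big /=; apply: ler_sum => x xS; apply: ler_sum => y yP.
exact: f_le.
Qed.

Lemma cost_partition {R : realFieldType} {X : finType} (rho : X -> X -> R)
    {B : seq {set X}} {W S : {set X}} (T : {set X}) :
  ordered_partition B W -> S \subset W ->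
  cost rho S T = \sum_(k < size B) cost rho (S :&: nth set0 B k) T.
Proof.
case=> _ unionB disjB SW.
have S_cover : S = \bigcup_(k < size B) (S :&: nth set0 B k).
  apply/setP => x; apply/idP/bigcupP => [xS|[k _]]; last by rewrite inE => /andP[].
  have /bigcupP[k _ xk] : x \in \bigcup_(k < size B) nth set0 B k.
    by rewrite unionB (subsetP SW).
  by exists k; rewrite // inE xS.
have disj_traces : forall i j : 'I_(size B), i != j ->
    [disjoint S :&: nth set0 B i & S :&: nth set0 B j].
  move=> i j ij; apply: (disjointW (subsetIr _ _) (subsetIr _ _)).
  by apply: disjB => // /val_inj /eqP; rewrite (negbTE ij).
by rewrite /cost {1}S_cover (partition_disjoint_bigcup _ _ disj_traces).
Qed.

Lemma cost_bins {R : realFieldType} {X : finType} (rho : X -> X -> R)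
    {B : seq {set X}} {W : {set X}} (T : {set X}) :
  ordered_partition B W ->
  cost rho W T = \sum_(k < size B) cost rho (nth set0 B k) T.
Proof.
move=> partB; rewrite (cost_partition rho T partB (subxx W)).
apply: eq_bigr => k _; congr (cost rho _ T); apply/setIidPr.
case: partB => _ <- _; exact: (bigcup_sup k).
Qed.

Lemma cost_next_bin_le (R : realFieldType) (X : finType) (rho : X -> X -> R)
    (T Bk Bk1 S : {set X}) (r : R) :
  is_metric rho -> 0 <= r -> (0 : R) < #|Bk|%:R ->
  S \subset Bk1 ->
  (#|S|%:R : R) <= r * #|Bk1|%:R ->
  (#|Bk1|%:R : R) <= 3 / 2 * #|Bk|%:R ->
  (forall x x', x \in Bk -> x' \in Bk1 -> dist_set rho x' T <= dist_set rho x T) ->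
  cost rho S T <= 3 / 2 * r * cost rho Bk T.
Proof.
move=> metric_rho r_ge0 Bk_gt0 SBk1 S_small Bk1_small farther.
have averaging : cost rho S T * #|Bk|%:R <= cost rho Bk T * #|S|%:R.
  apply: sum_mul_card_le => x y xS yBk.
  exact: farther yBk (subsetP SBk1 x xS).
have S_card : (#|S|%:R : R) <= r * (3 / 2 * #|Bk|%:R).
  by apply: le_trans S_small _; rewrite ler_wpM2l.
rewrite -(ler_pM2r Bk_gt0); apply: le_trans averaging _.
have cost_Bk_ge0 := cost_ge0 metric_rho Bk T.
apply: le_trans (ler_wpM2l cost_Bk_ge0 S_card) _.
by rewrite le_eqVlt; apply/orP; left; apply/eqP; ring.
Qed.

Theorem lemma6 (R : realFieldType) (X : finType) (rho : X -> X -> R)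
  (W T : {set X}) (z : R) (B : seq {set X}) (A : {set X}) (r : R) :
  is_metric rho ->
  T != set0 ->
  0 < z ->
  linear_bin_division rho z W T B ->
  A \subset W ->
  0 < r < 1 ->
  (forall k, (k < size B)%N ->
     (#|nth set0 B k :&: A|%:R : R) / #|nth set0 B k|%:R <= r) ->
  cost rho (A :\: nth set0 B 0) T <= 3 / 2 * r * cost rho W T.
Proof.
move=> metric_rho _ z_gt0 [partB sizes _ growth farther] AW /andP[r_gt0 _] dense.
have coef_ge0 : 0 <= 3 / 2 * r by rewrite mulr_ge0 ?divr_ge0 ?ltW.
case: ifP sizes => z_small sizes; last first.
  have -> : A :\: nth set0 B 0 = set0 by apply/eqP; rewrite sizes setD_eq0.
  by rewrite /cost big_set0 mulr_ge0 // (cost_ge0 metric_rho).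
pose Bk k := nth set0 B k.
have Bk_gt0 k : (k < size B)%N -> (0 : R) < #|Bk k|%:R.
  by move=> kB; apply: lt_le_trans (sizes k kB); rewrite divr_gt0 ?mulr_gt0.
have step k : (k.+1 < size B)%N ->
    cost rho ((A :\: Bk 0) :&: Bk k.+1) T <= 3 / 2 * r * cost rho (Bk k) T.
  move=> kB; apply: cost_next_bin_le (ltW r_gt0) (Bk_gt0 k (ltnW kB))
    _ _ _ (farther k kB) => //; first exact: subsetIr.
  - apply: le_trans (_ : (#|Bk k.+1 :&: A|%:R : R) <= _).
      by rewrite ler_nat [Bk k.+1 :&: A]setIC subset_leq_card // setSI // subsetDl.
    by rewrite -ler_pdivrMr ?dense ?Bk_gt0.
  - by rewrite -ler_pdivrMr ?growth ?Bk_gt0 // ltnW.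
have first_empty : (A :\: Bk 0) :&: Bk 0 = set0.
  by rewrite setDE -setIA [~: _ :&: _]setIC setICr setI0.
rewrite (cost_partition rho T partB (subset_trans (subsetDl _ _) AW)).
rewrite (cost_bins rho T partB) mulr_sumr.
case: partB step => + _ _; case: (size B) => [//|n] _ step.
rewrite big_ord_recl big_ord_recr /= first_empty [cost _ set0 _]big_set0 add0r.
rewrite -[X in X <= _]addr0; apply: lerD.
  by apply: ler_sum => i _; apply: step; rewrite ltnS.
by rewrite mulr_ge0 // (cost_ge0 metric_rho).
Qed.
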